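(* The topology automaton $M_K$ of a fractal gasket $K$ is a gasket automaton.
   Context: Let $\Delta\subset\mathbb R^2$ be the triangle with vertices $\omega_\alpha=(0,0)$, $\omega_\beta=(1,0)$, $\omega_\gamma=(1/2,\sqrt3/2)$. A fractal gasket is the attractor $K$ of $\{\varphi_j(z)=r_j(z+d_j)\}_{j=1}^N$, $r_j\in(0,1)$, $d_j\in\mathbb R^2$, with $\bigcup_j\varphi_j(\Delta)\subset\Delta$ and, for $i\neq j$, $\varphi_i(\Delta)\cap\varphi_j(\Delta)$ consisting only of common vertices. $\Sigma=\{1,\dots,N\}$; $\alpha=-1$ if $(0,0)\notin K$, else $\alpha$ is the index with $\varphi_\alpha((0,0))=(0,0)$; $\beta=-2$ or $\varphi_\beta$ fixes $(1,0)$; $\gamma=-3$ or $\varphi_\gamma$ fixes $\omega_\gamma$. Triangle automaton: state set $Q=\{S_{uv}:u\ne v\in\{\alpha,\beta,\gamma\}\}\cup\{Id,Exit\}$, input alphabet $\Sigma^2$, initial state $Id$, transition $\delta$ with $\delta(Id,(i,j))=Id$ iff $i=j$; $\delta(Id,(i,j))=S_{uv}\Rightarrow\delta(Id,(j,i))=S_{vu}$; $\delta(S_{uv},(i,j))=S_{uv}$ if $(i,j)=(v,u)$, else $Exit$. The topology automaton $M_K$ is the triangle automaton with, for $i\ne j$: $\delta(Id,(i,j))=S_{uv}$ if $u,v\in\Sigma$ and $\varphi_i(\omega_v)=\varphi_j(\omega_u)$; $\delta(Id,(i,j))=Exit$ if $\varphi_i(K)\cap\varphi_j(K)=\emptyset$.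 With $\mathcal P_{uv}=\{(i,j):\delta(Id,(i,j))=S_{uv}\}$, $i\triangleleft_{uv}j$ iff $(i,j)\in\mathcal P_{uv}$ (iff $j\triangleleft_{vu}i$), and $j$ $uv$-minimal iff no $i\triangleleft_{uv}j$: a gasket automaton is a triangle automaton with (Uniqueness) $i\triangleleft_{uv}j,i\triangleleft_{uv}j'\Rightarrow j=j'$; (Gathering) any two of $a\triangleleft_{\alpha\gamma}c$, $a\triangleleft_{\beta\gamma}b$, $b\triangleleft_{\alpha\beta}c$ imply the third; (Boundary) if $\alpha\in\Sigma$ it is $\alpha\gamma$- and $\alpha\beta$-minimal; if $\beta\in\Sigma$ it is $\beta\gamma$- and $\beta\alpha$-minimal; if $\gamma\in\Sigma$ it is $\gamma\alpha$- and $\gamma\beta$-minimal. *)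

From HB Require Import structures.
From mathcomp Require Import all_boot all_order all_algebra.
From mathcomp Require Import all_classical all_reals all_analysis.
Set Implicit Arguments. Unset Strict Implicit. Unset Printing Implicit Defensive.
Import Order.TTheory GRing.Theory Num.Theory.
Import numFieldTopology.Exports numFieldNormedType.Exports.
Local Open Scope classical_set_scope.
Local Open Scope ring_scope.

Inductive vtx := VA | VB | VC.

Definition vtx_eqb (u v : vtx) : bool :=
  match u, v with VA, VA | VB, VB | VC, VC => true | _, _ => false end.
Lemma vtx_eqbP : Equality.axiom vtx_eqb.
Proof. by case; case; constructor. Qed.
HB.instance Definition _ := hasDecEq.Build vtx vtx_eqbP.

Section Geometry.
Variable R : realType.

Definition omega (u : vtx) : R * R :=
  match u with
  | VA => (0, 0)
  | VB => (1, 0)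
  | VC => (1 / 2, Num.sqrt 3 / 2)
  end.

Definition Delta : set (R * R) :=
  [set x | exists a b c : R, [/\ 0 <= a, 0 <= b, 0 <= c, a + b + c = 1 &
     x = (a * (omega VA).1 + b * (omega VB).1 + c * (omega VC).1,
          a * (omega VA).2 + b * (omega VB).2 + c * (omega VC).2)]].

Definition simil (r : R) (d : R * R) (z : R * R) : R * R :=
  (r * (z.1 + d.1), r * (z.2 + d.2)).

End Geometry.

Definition fractal_gasket (R : realType) (N : nat) (r : 'I_N -> R)
    (d : 'I_N -> R * R) (K : set (R * R)) : Prop :=
  [/\ (forall j, 0 < r j < 1),
      (forall j, simil (r j) (d j) @` @Delta R `<=` @Delta R),
      (forall i j, i != j -> forall x,
          (simil (r i) (d i) @` @Delta R) x -> (simil (r j) (d j) @` @Delta R) x ->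
          exists u v, x = simil (r i) (d i) (@omega R u) /\
                      x = simil (r j) (d j) (@omega R v)) &
      [/\ compact K, (K !=set0) &
           K = \bigcup_(j in [set: 'I_N]) (simil (r j) (d j) @` K)]].

(* The indices alpha, beta, gamma: None encodes -1,-2,-3 (vertex not in K);
   otherwise the index of the map fixing that vertex. *)
Definition corner (R : realType) (N : nat) (r : 'I_N -> R) (d : 'I_N -> R * R)
    (K : set (R * R)) (u : vtx) : option 'I_N :=
  if `[< K (@omega R u) >] then
    [pick j : 'I_N | simil (r j) (d j) (@omega R u) == @omega R u]
  else None.

Inductive state := QId | QExit | QS (p : {p : vtx * vtx | p.1 != p.2}).

Definition isS (q : state) (u v : vtx) : bool :=
  match q with QS p => val p == (u, v) | _ => false end.

Definition triangle_automaton (N : nat) (c : vtx -> option 'I_N)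
    (delta : state -> 'I_N * 'I_N -> state) : Prop :=
  [/\ (forall i j, delta QId (i, j) = QId <-> i = j),
      (forall i j u v, isS (delta QId (i, j)) u v -> isS (delta QId (j, i)) v u) &
      (forall p i j, delta (QS p) (i, j) =
          if (c (val p).2 == Some i) && (c (val p).1 == Some j) then QS p else QExit)].

Definition prec (N : nat) (delta : state -> 'I_N * 'I_N -> state)
    (u v : vtx) (i j : 'I_N) : Prop := isS (delta QId (i, j)) u v.

Definition gasket_automaton (N : nat) (c : vtx -> option 'I_N)
    (delta : state -> 'I_N * 'I_N -> state) : Prop :=
  let P := prec delta in
  [/\ triangle_automaton c delta,
      (forall u v i j j', P u v i j -> P u v i j' -> j = j'),
      (forall a b c0 : 'I_N,
          (P VA VC a c0 -> P VB VC a b -> P VA VB b c0) /\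
          (P VA VC a c0 -> P VA VB b c0 -> P VB VC a b) /\
          (P VB VC a b -> P VA VB b c0 -> P VA VC a c0)) &
      [/\ (forall a, c VA = Some a -> forall i, ~ P VA VC i a /\ ~ P VA VB i a),
          (forall b, c VB = Some b -> forall i, ~ P VB VC i b /\ ~ P VB VA i b) &
          (forall g, c VC = Some g -> forall i, ~ P VC VA i g /\ ~ P VC VB i g)]].

Definition topology_automaton (R : realType) (N : nat) (r : 'I_N -> R)
    (d : 'I_N -> R * R) (K : set (R * R))
    (delta : state -> 'I_N * 'I_N -> state) : Prop :=
  let c := corner r d K in
  triangle_automaton c delta /\
  forall i j : 'I_N, i != j ->
    (forall u v : vtx, u != v -> c u != None -> c v != None ->
        simil (r i) (d i) (@omega R v) = simil (r j) (d j) (@omega R u) ->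
        isS (delta QId (i, j)) u v) /\
    ((simil (r i) (d i) @` K) `&` (simil (r j) (d j) @` K) = set0 ->
        delta QId (i, j) = QExit).

(* Delta is cut out by the three barycentric inequalities bary_k >= 0, and a
   similitude phi of ratio r with phi(Delta) in Delta satisfies
   bary_k(phi y) >= r bary_k(y); hence K lies in Delta, and a vertex of Delta
   lying in K is fixed by the piece containing it.  Two pieces phi_i(Delta),
   phi_j(Delta) meeting only at vertices can never send the same vertex to the
   same point and share at most one pair of vertices, both times because
   otherwise they would share the midpoint of an edge.  So in any topology
   automaton, i <|_uv j holds exactly when phi_i(omega_v) = phi_j(omega_u) with
   omega_u, omega_v in K, and uniqueness, gathering and the boundary condition
   become statements about equalities between images of vertices. *)

From Pilot Require Import Defs.
From mathcomp Require Import all_boot all_order all_algebra.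
From mathcomp Require Import all_classical all_reals all_analysis.
From mathcomp Require Import ring lra.
Set Implicit Arguments. Unset Strict Implicit. Unset Printing Implicit Defensive.
Import Order.TTheory GRing.Theory Num.Theory.
Import numFieldTopology.Exports numFieldNormedType.Exports.
Local Open Scope classical_set_scope.
Local Open Scope ring_scope.

Section Barycentric.
Variable R : realType.
Local Notation sqrt3 := (Num.sqrt 3 : R).
Local Notation omega := (@omega R).
Local Notation Delta := (@Delta R).

Lemma sqrt3_neq0 : sqrt3 != 0.
Proof. by rewrite gt_eqF // sqrtr_gt0. Qed.

Definition bary (k : vtx) (p : R * R) : R :=
  match k with
  | VA => 1 - p.1 - p.2 / sqrt3
  | VB => p.1 - p.2 / sqrt3
  | VC => 2 * (p.2 / sqrt3)
  end.

Lemma bary_omega k w : bary k (omega w) = (k == w)%:R.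
Proof. by have := sqrt3_neq0; case: k; case: w => /= ?; field. Qed.

Lemma bary_sum p : bary VA p + bary VB p + bary VC p = 1.
Proof. by have := sqrt3_neq0 => ?; rewrite /=; field. Qed.

Lemma bary_coordE p : p = (bary VB p + bary VC p / 2, bary VC p * sqrt3 / 2).
Proof. by have := sqrt3_neq0; case: p => x y /= ?; congr pair; field. Qed.

Lemma bary_inj p q : (forall k, bary k p = bary k q) -> p = q.
Proof. by move=> e; rewrite (bary_coordE p) (bary_coordE q) !e. Qed.

Lemma bary_inj_but u p q : (forall k, k != u -> bary k p = bary k q) -> p = q.
Proof.
move=> e; apply: bary_inj => k; have [->{k}|/e //] := eqVneq k u.
have := bary_sum p; have := bary_sum q.
by case: u e => e; [rewrite (e VB) // (e VC) | rewrite (e VA) // (e VC) |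
  rewrite (e VA) // (e VB)] => //; lra.
Qed.

Lemma omega_inj : injective omega.
Proof.
move=> u v /(congr1 (bary u)); rewrite !bary_omega eqxx.
by case: eqP => // _ /eqP; rewrite oner_eq0.
Qed.

Lemma DeltaP p : Delta p <-> forall k, 0 <= bary k p.
Proof.
have s0 := sqrt3_neq0; split.
  case=> a [b [c [a0 b0 c0 abc ->]]] k.
  suff -> : bary k (a * (omega VA).1 + b * (omega VB).1 + c * (omega VC).1,
                    a * (omega VA).2 + b * (omega VB).2 + c * (omega VC).2) =
            match k with VA => a | VB => b | VC => c end by case: k.
  by case: k => /=; [rewrite -{1}abc|..]; field.
move=> bary_ge0; exists (bary VA p), (bary VB p), (bary VC p); split => //.
  exact: bary_sum.
by rewrite {1}(bary_coordE p) /=; congr pair; field.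
Qed.

Lemma Delta_omega w : Delta (omega w).
Proof. by apply/DeltaP => k; rewrite bary_omega. Qed.

Definition comb (t : R) (p q : R * R) : R * R :=
  (t * p.1 + (1 - t) * q.1, t * p.2 + (1 - t) * q.2).

Definition midpoint := comb (1 / 2).

Lemma bary_comb t p q k : bary k (comb t p q) = t * bary k p + (1 - t) * bary k q.
Proof. by have := sqrt3_neq0; case: k => /= ?; field. Qed.

Lemma Delta_comb t p q : 0 <= t <= 1 -> Delta p -> Delta q -> Delta (comb t p q).
Proof.
move=> /andP[t0 t1] /DeltaP Dp /DeltaP Dq; apply/DeltaP => k.
by rewrite bary_comb; have := Dp k; have := Dq k; nra.
Qed.

Lemma Delta_midpoint u v : Delta (midpoint (omega u) (omega v)).
Proof. by apply: Delta_comb; [lra | exact: Delta_omega | exact: Delta_omega]. Qed.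

Lemma midpoint_neq_omega u v w : u != v -> midpoint (omega u) (omega v) != omega w.
Proof.
move=> uv; apply/eqP => /(congr1 (bary u)).
by rewrite bary_comb !bary_omega eqxx (negbTE uv); case: eqP => _ /=; lra.
Qed.

Lemma simil_comb r d t p q :
  simil r d (comb t p q) = comb t (simil r d p) (simil r d q).
Proof. by rewrite /simil /comb /=; congr pair; ring. Qed.

Lemma simil_inj (r : R) d : r != 0 -> injective (simil r d).
Proof.
by move=> r0 [x1 y1] [x2 y2] [] /= /(mulfI r0)/addIr -> /(mulfI r0)/addIr ->.
Qed.

Lemma bary_similB r d y z k :
  bary k (simil r d y) - bary k (simil r d z) = r * (bary k y - bary k z).
Proof. by have := sqrt3_neq0; case: k => /= ?; field. Qed.

Lemma bary_continuous k : continuous (bary k).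
Proof.
by case: k => p; repeat (exact: cvg_cst || exact: cvg_fst || exact: cvg_snd ||
  apply: cvgB || apply: cvgM).
Qed.

Section InnerSimilitude.
Variables (r : R) (d : R * R).
Hypotheses (r_gt0 : 0 < r) (simil_Delta : simil r d @` Delta `<=` Delta).

Lemma bary_simil_ge k y : r * bary k y <= bary k (simil r d y).
Proof.
have [w kw] : exists w, w != k by case: k; [exists VB | exists VA | exists VA].
have /DeltaP/(_ k) : Delta (simil r d (omega w)).
  by apply: simil_Delta; exists (omega w) => //; exact: Delta_omega.
have := bary_similB r d y (omega w) k; rewrite bary_omega eq_sym (negbTE kw) /=.
lra.
Qed.

Lemma simil_eq_omega y u : Delta y -> simil r d y = omega u -> y = omega u.
Proof.
move=> /DeltaP Dy e; apply: (@bary_inj_but u) => k ku.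
have := bary_simil_ge k y; rewrite e !bary_omega (negbTE ku) /= => H.
have : bary k y <= 0 by rewrite -(pmulr_rle0 _ r_gt0).
by have := Dy k; lra.
Qed.

End InnerSimilitude.

(* The most negative barycentric coordinate over K is attained at some point c;
   writing c as the image of x in K under a contraction would make the
   coordinate at x even smaller, unless it is nonnegative. *)
Lemma attractor_sub_Delta (I : Type) (r : I -> R) (d : I -> R * R) (K : set (R * R)) :
  (forall j, 0 < r j < 1) -> (forall j, simil (r j) (d j) @` Delta `<=` Delta) ->
  compact K -> K `<=` \bigcup_(j in [set: I]) (simil (r j) (d j) @` K) ->
  K `<=` Delta.
Proof.
move=> r_bnd inner cK Kcover y0 Ky0; apply/DeltaP => k.
have [||c Kc cmax] := @compact_EVT_max _ _ (fun y => - bary k y) K _ cK.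
- by exists y0.
- by apply/continuous_subspaceT => y; apply: cvgN; exact: bary_continuous.
suff : 0 <= bary k c by have := cmax y0 (mem_set Ky0); lra.
have [j _ [x Kx xc]] := Kcover c (set_mem Kc); rewrite -xc in cmax *.
have /andP[rj0 rj1] := r_bnd j.
have := bary_simil_ge (inner j) k x; have := cmax x (mem_set Kx).
nra.
Qed.

Definition vertex_contact (f g : R * R -> R * R) : Prop :=
  forall x, (f @` Delta) x -> (g @` Delta) x ->
  exists u v, x = f (omega u) /\ x = g (omega v).

Lemma vertex_contactC f g : vertex_contact f g -> vertex_contact g f.
Proof. by move=> fg x gx fx; have [u [v [? ?]]] := fg x fx gx; exists v, u. Qed.

(* The smaller of two equally oriented triangles sharing the corner u lies
   inside the larger one, so they would share the midpoint of an edge. *)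
Lemma simil_vertex_neq ri di rj dj u : 0 < ri -> 0 < rj ->
  vertex_contact (simil ri di) (simil rj dj) ->
  simil ri di (omega u) != simil rj dj (omega u).
Proof.
wlog rij : ri di rj dj / ri <= rj => [wlog ri0 rj0 contact|ri0 rj0 contact].
  have [/wlog|/ltW/wlog] := leP ri rj; first exact.
  by rewrite eq_sym; apply => //; exact: vertex_contactC.
apply/eqP => e; have rj_neq0 : rj != 0 by rewrite gt_eqF.
pose p := midpoint (omega VA) (omega VB).
pose z := comb (ri / rj) p (omega u).
have Dz : Delta z.
  apply: Delta_comb; [|exact: Delta_midpoint|exact: Delta_omega].
  by rewrite divr_ge0 ?(ltW ri0) ?(ltW rj0) //= ler_pdivrMr // mul1r.
have ez : simil rj dj z = simil ri di p.
  apply: bary_inj => k.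
  have := bary_similB ri di p (omega u) k; have := bary_similB rj dj z (omega u) k.
  rewrite bary_comb e.
  have -> : rj * (ri / rj * bary k p + (1 - ri / rj) * bary k (omega u) - bary k (omega u))
    = ri * (bary k p - bary k (omega u)) by field.
  lra.
have [w [_ [pw _]]] := contact _ (ex_intro2 _ _ p (Delta_midpoint _ _) erefl)
  (ex_intro2 _ _ z Dz ez).
have /eqP := @midpoint_neq_omega VA VB w isT.
by apply; apply: simil_inj pw; rewrite gt_eqF.
Qed.

Lemma simil_vertex_pair_uniq ri di rj dj u v u' v' : ri != 0 -> rj != 0 ->
  vertex_contact (simil ri di) (simil rj dj) ->
  simil ri di (omega v) = simil rj dj (omega u) ->
  simil ri di (omega v') = simil rj dj (omega u') -> u = u' /\ v = v'.
Proof.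
move=> ri0 rj0 contact e e'; have [vv'|vv'] := eqVneq v v'.
  by subst v'; split => //; apply/omega_inj/(@simil_inj rj dj rj0); rewrite -e -e'.
pose m := midpoint (omega v) (omega v').
have em : simil rj dj (midpoint (omega u) (omega u')) = simil ri di m.
  by rewrite /m /midpoint !simil_comb e e'.
have [w [_ [mw _]]] := contact _ (ex_intro2 _ _ m (Delta_midpoint _ _) erefl)
  (ex_intro2 _ _ _ (Delta_midpoint _ _) em).
by have /eqP := @midpoint_neq_omega v v' w vv'; case; apply: simil_inj mw.
Qed.

End Barycentric.

Lemma isS_uniq q u v u' v' : isS q u v -> isS q u' v' -> u = u' /\ v = v'.
Proof. by case: q => // p /= /eqP -> /eqP []. Qed.

Section TopologyAutomaton.
Variables (R : realType) (N : nat) (r : 'I_N -> R) (d : 'I_N -> R * R) (K : set (R * R)).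
Hypothesis gasketK : fractal_gasket r d K.
Local Notation omega := (@omega R).
Local Notation Delta := (@Delta R).
Local Notation phi j := (simil (r j) (d j)).
Local Notation corner := (corner r d K).

Lemma r_gt0 j : 0 < r j.
Proof. by case: gasketK => /(_ j)/andP[]. Qed.

Lemma r_neq0 j : r j != 0.
Proof. by rewrite gt_eqF ?r_gt0. Qed.

Lemma phi_Delta j : phi j @` Delta `<=` Delta.
Proof. by case: gasketK. Qed.

Lemma phi_vertex_contact i j : i != j -> vertex_contact (phi i) (phi j).
Proof. by case: gasketK => _ _ + _; apply. Qed.

Lemma K_sub_Delta : K `<=` Delta.
Proof.
case: gasketK => r_bnd inner _ [cK _ Keq].
by apply: attractor_sub_Delta r_bnd inner cK _; rewrite {1}Keq.
Qed.

Lemma phi_vertex_neq i j u : i != j -> phi i (omega u) != phi j (omega u).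
Proof. by move=> ij; apply: simil_vertex_neq (r_gt0 i) (r_gt0 j) (phi_vertex_contact ij). Qed.

Lemma cornerP u : corner u != None <-> K (omega u).
Proof.
rewrite /Defs.corner; case: asboolP => // Ku; split => // _.
case: pickP => // no_fix; move: Ku; case: gasketK => _ _ _ [_ _ ->] [j _ [x Kx xu]].
have x_u := simil_eq_omega (r_gt0 j) (@phi_Delta j) (K_sub_Delta Kx) xu.
by have := no_fix j; rewrite -{1}x_u xu eqxx.
Qed.

Lemma corner_fix u a : corner u = Some a -> phi a (omega u) = omega u.
Proof.
rewrite /Defs.corner; case: asboolP => _; last by [].
by case: pickP => [j /eqP fix_j [<-] | _].
Qed.

Definition vertex_meet i j u v : Prop :=
  [/\ i != j, phi i (omega v) = phi j (omega u), K (omega u) & K (omega v)].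

Lemma vertex_meetC i j u v : vertex_meet i j u v -> vertex_meet j i v u.
Proof. by case=> ij e Ku Kv; split; rewrite 1?eq_sym. Qed.

Lemma vertex_meet_neq i j u v : vertex_meet i j u v -> u != v.
Proof. by case=> ij e _ _; apply/eqP => uv; case/eqP: (phi_vertex_neq u ij); rewrite {1}uv e. Qed.

Lemma vertex_meet_uniq i j u v u' v' :
  vertex_meet i j u v -> vertex_meet i j u' v' -> u = u' /\ v = v'.
Proof.
case=> ij e _ _ [_ e' _ _].
exact: simil_vertex_pair_uniq (r_neq0 i) (r_neq0 j) (phi_vertex_contact ij) e e'.
Qed.

Lemma phi_K_meet i j x : i != j -> (phi i @` K) x -> (phi j @` K) x ->
  exists u v, vertex_meet i j u v.
Proof.
move=> ij [y Ky yx] [z Kz zx].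
have [v [u [xv xu]]] := phi_vertex_contact ij
  (ex_intro2 _ _ y (K_sub_Delta Ky) yx) (ex_intro2 _ _ z (K_sub_Delta Kz) zx).
have yv : y = omega v by apply: (@simil_inj _ _ (d i) (r_neq0 i)); rewrite yx.
have zu : z = omega u by apply: (@simil_inj _ _ (d j) (r_neq0 j)); rewrite zx.
by exists u, v; split; rewrite // -?xv -?xu -?yv -?zu.
Qed.

Definition topology_delta (q : state) (ij : 'I_N * 'I_N) : state :=
  match q with
  | QId =>
    if ij.1 == ij.2 then QId else
    match pselect (exists p : {p : vtx * vtx | p.1 != p.2},
                     vertex_meet ij.1 ij.2 (val p).1 (val p).2) with
    | left e => QS (projT1 (cid e))
    | right _ => QExit
    end
  | QExit => QExit
  | QS p => if (corner (val p).2 == Some ij.1) && (corner (val p).1 == Some ij.2)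
            then QS p else QExit
  end.

Lemma isS_topology_delta i j u v :
  isS (topology_delta QId (i, j)) u v <-> vertex_meet i j u v.
Proof.
rewrite /=; have [<-|_] := eqVneq i j; first by split => // -[]; rewrite eqxx.
case: pselect => [ex|no_meet]; last first.
  by split => // m; case: no_meet; exists (exist _ (u, v) (vertex_meet_neq m)).
case: (cid ex) => [[[a b] ab] m] /=; split => [/eqP[<- <-] // | m'].
by have [<- <-] := vertex_meet_uniq m m'.
Qed.

Lemma topology_automaton_topology_delta : topology_automaton r d K topology_delta.
Proof.
split; first split.
- move=> i j /=; case: eqP => [->|ij]; first by [].
  by split => [|/ij //]; case: pselect.
- by move=> i j u v /isS_topology_delta/vertex_meetC/isS_topology_delta.
- by [].
move=> i j ij; split.
  by move=> u v _ /cornerP Ku /cornerP Kv e; apply/isS_topology_delta.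
move=> disjoint /=; rewrite (negbTE ij); case: pselect => // ex; exfalso.
have [p [_ e Ku Kv]] := ex.
have : (phi i @` K `&` phi j @` K) (phi i (omega (val p).2)).
  by split; [exists (omega (val p).2) | rewrite e; exists (omega (val p).1)].
by rewrite disjoint.
Qed.

Section AnyTopologyAutomaton.
Variable dl : state -> 'I_N * 'I_N -> state.
Hypothesis dl_topology : topology_automaton r d K dl.
Local Notation prec := (prec dl).

Lemma vertex_meet_prec i j u v : vertex_meet i j u v -> prec u v i j.
Proof.
case: dl_topology => _ spec m; have [ij e Ku Kv] := m.
apply: (proj1 (spec i j ij)) e; first exact: vertex_meet_neq m.
- exact/cornerP.
- exact/cornerP.
Qed.

(* If phi_i(K) and phi_j(K) were disjoint the transition would be Exit;
   otherwise they meet at a pair of vertices, which fixes the state S_uv. *)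
Lemma precP i j u v : prec u v i j <-> vertex_meet i j u v.
Proof.
split; last exact: vertex_meet_prec.
case: dl_topology => [[id_iff _ _] spec] Puv.
have ij : i != j.
  by apply/eqP => ij; move: Puv; rewrite /Defs.prec ij (proj2 (id_iff j j)).
have [[x [xi xj]]|disjoint] := pselect (exists x, (phi i @` K) x /\ (phi j @` K) x).
  have [a [b m]] := phi_K_meet ij xi xj.
  by have [-> ->] := isS_uniq Puv (vertex_meet_prec m).
move: Puv; rewrite /Defs.prec (proj2 (spec i j ij)) //.
by apply/seteqP; split => // x [xi xj]; apply: disjoint; exists x.
Qed.

Lemma prec_uniq u v i j j' : prec u v i j -> prec u v i j' -> j = j'.
Proof.
move=> /precP[_ e _ _] /precP[_ e' _ _]; have [//|jj'] := eqVneq j j'.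
by case/eqP: (phi_vertex_neq u jj'); rewrite -e -e'.
Qed.

Lemma prec_sym u v i j : prec u v i j -> prec v u j i.
Proof. by move=> /precP/vertex_meetC/precP. Qed.

Lemma prec_trans u v w a b c :
  prec u w a c -> prec v u c b -> v != w -> prec v w a b.
Proof.
move=> /precP[_ e1 _ Kw] /precP[_ e2 Kv _] vw; apply/precP; split => //; last first.
  by rewrite e1 e2.
apply: contra_neq vw => ab; apply/omega_inj/(@simil_inj _ _ (d a) (r_neq0 a)).
by rewrite e1 e2 ab.
Qed.

Lemma corner_not_prec u w i g : corner u = Some g -> ~ prec u w i g.
Proof.
move=> cu /precP[ig e _ _]; rewrite (corner_fix cu) in e.
have /omega_inj wu := simil_eq_omega (r_gt0 i) (@phi_Delta i) (Delta_omega _ w) e.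
by case/eqP: (phi_vertex_neq u ig); rewrite (corner_fix cu) -{1}wu e.
Qed.

Lemma topology_gasket_automaton : gasket_automaton corner dl.
Proof.
split; first exact: dl_topology.1.
- exact: prec_uniq.
- move=> a b c; split; [|split] => P1 P2.
  + exact: prec_trans (prec_sym P2) P1 isT.
  + exact: prec_trans P1 (prec_sym P2) isT.
  + exact: prec_trans P1 P2 isT.
- by split=> g cg i; split; apply: corner_not_prec cg.
Qed.

End AnyTopologyAutomaton.
End TopologyAutomaton.

Theorem lemma4p1 (R : realType) (N : nat) (r : 'I_N -> R) (d : 'I_N -> R * R)
    (K : set (R * R)) :
  fractal_gasket r d K ->
  (exists delta, topology_automaton r d K delta) /\
  (forall delta, topology_automaton r d K delta ->
     gasket_automaton (corner r d K) delta).
Proof.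
move=> gasketK; split; first by exists (topology_delta r d K); exact: topology_automaton_topology_delta.
by move=> delta; exact: topology_gasket_automaton.
Qed.
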